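(* Let $(G,s,t)$ be a TTSPG and let $L=(G,l)$ for a length function $l:E\to\mathbb R_{\ge0}$. Then $[L,s,t]$ is either empty or a closed bounded interval of $\mathbb R$ (possibly a single point).
   Context: A graph has a finite vertex set and a finite multiset $E$ of edges, each an unordered pair of distinct vertices. A linkage is $L=(G,l)$ with $l:E\to\mathbb R_{\ge0}$; $C(L)=\{p:V\to\mathbb R^2: |p(u)-p(v)|=l(\{u,v\})\ \forall\{u,v\}\in E\}$ and $M(L)$ is its quotient by orientation preserving isometries of $\mathbb R^2$. $[L,s,t]=\{|p(s)-p(t)|:p\in M(L)\}$. A TTG is $(G,s,t)$ with $s\neq t$ vertices of $G$; series composition $(G_1,s_1,t_1)\circ(G_2,s_2,t_2)=(G_1\cup_{t_2\sim s_1}G_2,s_2,t_1)$; parallel composition $(G_1,s_1,t_1)\|(G_2,s_2,t_2)=(G_1\cup_{s_1\sim s_2,t_1\sim t_2}G_2,s_1,t_1)$. TTSPGs form the smallest class of TTGs containing the single edge $(K_2,s,t)$ and closed under series and parallel composition. *)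

From Stdlib Require Import Reals List.
Import ListNotations.
Open Scope R_scope.

Inductive vtx (I : Type) : Type :=
| Src : vtx I
| Snk : vtx I
| Inn : I -> vtx I.
Arguments Src {I}. Arguments Snk {I}. Arguments Inn {I} _.

(* Syntax trees of two-terminal series-parallel graphs.
   Ser T1 T2 denotes (G1,s1,t1) o (G2,s2,t2), Par T1 T2 denotes (G1,s1,t1) || (G2,s2,t2). *)
Inductive sp : Type :=
| SPEdge : sp
| SPSer : sp -> sp -> sp
| SPPar : sp -> sp -> sp.

Fixpoint inner (T : sp) : Type :=
  match T with
  | SPEdge => Empty_set
  | SPSer T1 T2 => (inner T1 + inner T2 + unit)%type  (* unit = glued vertex t2 ~ s1 *)
  | SPPar T1 T2 => (inner T1 + inner T2)%type
  end.

Definition V (T : sp) : Type := vtx (inner T).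

Definition ser_left (T1 T2 : sp) (v : V T1) : V (SPSer T1 T2) :=
  match v with
  | Src => Inn (inr tt)      (* s1 is glued to t2 *)
  | Snk => Snk
  | Inn i => Inn (inl (inl i))
  end.
Definition ser_right (T1 T2 : sp) (v : V T2) : V (SPSer T1 T2) :=
  match v with
  | Src => Src               (* s2 is the new source *)
  | Snk => Inn (inr tt)
  | Inn j => Inn (inl (inr j))
  end.
Definition par_left (T1 T2 : sp) (v : V T1) : V (SPPar T1 T2) :=
  match v with Src => Src | Snk => Snk | Inn i => Inn (inl i) end.
Definition par_right (T1 T2 : sp) (v : V T2) : V (SPPar T1 T2) :=
  match v with Src => Src | Snk => Snk | Inn j => Inn (inr j) end.

Definition map_edge {A B : Type} (f : A -> B) (e : A * A) : B * B :=
  (f (fst e), f (snd e)).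

Fixpoint edges (T : sp) : list (V T * V T) :=
  match T return list (V T * V T) with
  | SPEdge => [(Src, Snk)]
  | SPSer T1 T2 => map (map_edge (ser_left T1 T2)) (edges T1)
                   ++ map (map_edge (ser_right T1 T2)) (edges T2)
  | SPPar T1 T2 => map (map_edge (par_left T1 T2)) (edges T1)
                   ++ map (map_edge (par_right T1 T2)) (edges T2)
  end.

Definition dist2 (a b : R * R) : R :=
  sqrt ((fst a - fst b)^2 + (snd a - snd b)^2).

(* The length function l assigns to the i-th edge (of the list edges T) the length l i. *)
Definition realization (T : sp) (l : nat -> R) (p : V T -> R * R) : Prop :=
  forall i u v, nth_error (edges T) i = Some (u, v) -> dist2 (p u) (p v) = l i.

(* [L,s,t] = { |p(s) - p(t)| : p a realization }. *)
Definition dist_set (T : sp) (l : nat -> R) (d : R) : Prop :=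
  exists p : V T -> R * R, realization T l p /\ d = dist2 (p Src) (p Snk).

(* Any realization can be moved by an
   orientation preserving rigid motion so that its terminals land on any prescribed
   pair of points at the right distance.  Hence realizations of the two parts of a
   parallel composition can be glued exactly when they give the same terminal distance,
   so its distance set is the intersection of theirs; and for a series composition the
   realizable terminal distances are the d with |d1 - d2| <= d <= d1 + d2 for realizable
   d1, d2, because every triangle with these side lengths occurs in the plane.  Both
   operations send closed bounded intervals of [0, oo) to such intervals or to the
   empty set. *)
From Stdlib Require Import Reals List Lra Psatz Rgeom Lia.
Open Scope R_scope.

Lemma dist2_sym a b : dist2 a b = dist2 b a.
Proof. unfold dist2. f_equal. ring. Qed.

Lemma dist2_ge0 a b : 0 <= dist2 a b.
Proof. apply sqrt_pos. Qed.

Lemma dist2_triangle a b c : dist2 a c <= dist2 a b + dist2 b c.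
Proof.
  assert (dist2_euc : forall x y, dist2 x y = dist_euc (fst x) (snd x) (fst y) (snd y)).
  { intros x y. unfold dist2, dist_euc, Rsqr. f_equal. ring. }
  rewrite !dist2_euc. apply triangle.
Qed.

Lemma sqrt_eq_pow2 e a : 0 <= a -> e = a ^ 2 -> sqrt e = a.
Proof. intros Ha ->. apply sqrt_pow2; exact Ha. Qed.

Definition isometry (f : R * R -> R * R) := forall a b, dist2 (f a) (f b) = dist2 a b.

Definition rigid_motion (c s : R) (P A z : R * R) : R * R :=
  (fst A + (c * (fst z - fst P) - s * (snd z - snd P)),
   snd A + (s * (fst z - fst P) + c * (snd z - snd P))).

Lemma rigid_motion_isometry c s P A : c ^ 2 + s ^ 2 = 1 -> isometry (rigid_motion c s P A).
Proof.
  intros Hcs [x1 y1] [x2 y2]. unfold dist2, rigid_motion; cbn [fst snd]. f_equal.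
  transitivity ((c ^ 2 + s ^ 2) * ((x1 - x2) ^ 2 + (y1 - y2) ^ 2)); [ring|].
  rewrite Hcs. ring.
Qed.

Lemma isometry_exists P Q A B : dist2 P Q = dist2 A B ->
  exists f, isometry f /\ f P = A /\ f Q = B.
Proof.
  destruct P as [px py], Q as [qx qy], A as [ax ay], B as [bx by0].
  unfold dist2; cbn [fst snd]. intros Hd.
  set (ux := qx - px). set (uy := qy - py). set (wx := bx - ax). set (wy := by0 - ay).
  assert (Hsq : ux ^ 2 + uy ^ 2 = wx ^ 2 + wy ^ 2).
  { replace (ux ^ 2 + uy ^ 2) with ((px - qx) ^ 2 + (py - qy) ^ 2) by (unfold ux, uy; ring).
    replace (wx ^ 2 + wy ^ 2) with ((ax - bx) ^ 2 + (ay - by0) ^ 2) by (unfold wx, wy; ring).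
    apply sqrt_inj; [| | exact Hd]; apply Rplus_le_le_0_compat; apply pow2_ge_0. }
  destruct (Req_dec (ux ^ 2 + uy ^ 2) 0) as [H0 | H0].
  - exists (rigid_motion 1 0 (px, py) (ax, ay)).
    split; [apply rigid_motion_isometry; ring|].
    assert (ux = 0 /\ uy = 0 /\ wx = 0 /\ wy = 0) as (Eux & Euy & Ewx & Ewy)
      by (split; [|split; [|split]]; nra).
    unfold rigid_motion; cbn [fst snd]. fold ux uy.
    split; f_equal; unfold wx, wy in *; lra.
  - (* [(c, s)] is [w / u] as complex numbers; it has modulus 1 since [|u| = |w|]. *)
    set (n := ux ^ 2 + uy ^ 2) in *.
    set (c := (wx * ux + wy * uy) / n). set (s := (wy * ux - wx * uy) / n).
    assert (Hcs : c ^ 2 + s ^ 2 = 1).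
    { replace (c ^ 2 + s ^ 2) with ((wx ^ 2 + wy ^ 2) * n / n ^ 2)
        by (unfold c, s, n; field; exact H0).
      rewrite <- Hsq. field. exact H0. }
    assert (Hx : c * ux - s * uy = wx) by (unfold c, s, n in *; field; exact H0).
    assert (Hy : s * ux + c * uy = wy) by (unfold c, s, n in *; field; exact H0).
    exists (rigid_motion c s (px, py) (ax, ay)). split; [exact (rigid_motion_isometry _ _ _ _ Hcs)|].
    unfold rigid_motion; cbn [fst snd]. fold ux uy.
    split; f_equal; unfold wx, wy in *; lra.
Qed.

Definition triangle_ineq (d1 d2 d : R) := d1 - d2 <= d /\ d2 - d1 <= d /\ d <= d1 + d2.

Lemma triangle_ineq_dist2 X Y Z : triangle_ineq (dist2 Y Z) (dist2 X Y) (dist2 X Z).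
Proof.
  pose proof (dist2_triangle X Y Z). pose proof (dist2_triangle Y X Z).
  pose proof (dist2_triangle X Z Y). rewrite (dist2_sym Y X) in *. rewrite (dist2_sym Z Y) in *.
  unfold triangle_ineq. lra.
Qed.

Lemma triangle_exists d1 d2 d : 0 <= d1 -> 0 <= d2 -> triangle_ineq d1 d2 d ->
  exists X Y Z, dist2 X Y = d2 /\ dist2 Y Z = d1 /\ dist2 X Z = d.
Proof.
  intros h1 h2 (h3 & h4 & h5).
  destruct (Req_dec d 0) as [Hd | Hd].
  - exists (0, 0), (d2, 0), (0, 0). unfold dist2; cbn [fst snd].
    split; [|split]; apply sqrt_eq_pow2; subst; nra.
  - (* [Y = (x, y)] is the apex over the base [X = (0,0)], [Z = (d,0)]. *)
    set (x := (d ^ 2 + d2 ^ 2 - d1 ^ 2) / (2 * d)).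
    assert (Hy : 0 <= d2 ^ 2 - x ^ 2).
    { replace (d2 ^ 2 - x ^ 2)
        with ((d1 - d + d2) * (d1 + d - d2) * (d + d2 - d1) * (d + d2 + d1) / (4 * d ^ 2))
        by (unfold x; field; lra).
      apply Rmult_le_pos; [repeat apply Rmult_le_pos; lra|].
      left. apply Rinv_0_lt_compat. nra. }
    exists (0, 0), (x, sqrt (d2 ^ 2 - x ^ 2)), (d, 0). unfold dist2; cbn [fst snd].
    split; [|split]; apply sqrt_eq_pow2; try lra.
    + replace ((0 - sqrt (d2 ^ 2 - x ^ 2)) ^ 2) with (sqrt (d2 ^ 2 - x ^ 2) ^ 2) by ring.
      rewrite pow2_sqrt by exact Hy. ring.
    + replace ((sqrt (d2 ^ 2 - x ^ 2) - 0) ^ 2) with (sqrt (d2 ^ 2 - x ^ 2) ^ 2) by ring.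
      rewrite pow2_sqrt by exact Hy. unfold x. field. lra.
Qed.

Lemma realization_isometry T l p f :
  isometry f -> realization T l p -> realization T l (fun v => f (p v)).
Proof. intros Hf Hp i u v H. rewrite Hf. exact (Hp i u v H). Qed.

Lemma realization_ext T l p q :
  (forall v, p v = q v) -> realization T l p -> realization T l q.
Proof. intros He Hp i u v H. rewrite <- !He. exact (Hp i u v H). Qed.

Lemma dist_set_ge0 T l d : dist_set T l d -> 0 <= d.
Proof. intros [p [_ ->]]. apply dist2_ge0. Qed.

Lemma dist_set_relocate T l d A B : dist_set T l d -> dist2 A B = d ->
  exists q, realization T l q /\ q Src = A /\ q Snk = B.
Proof.
  intros [p [Hp Hd]] HAB.
  destruct (isometry_exists (p Src) (p Snk) A B) as [f [Hf [HA HB]]]; [congruence|].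
  exists (fun v => f (p v)). split; [exact (realization_isometry _ _ _ _ Hf Hp)|auto].
Qed.

Lemma nth_error_app_map_edge {A B C : Type} (f : A -> C) (g : B -> C)
    (L1 : list (A * A)) (L2 : list (B * B)) i :
  nth_error (map (map_edge f) L1 ++ map (map_edge g) L2) i =
  if Nat.ltb i (length L1) then option_map (map_edge f) (nth_error L1 i)
  else option_map (map_edge g) (nth_error L2 (i - length L1)).
Proof.
  destruct (Nat.ltb_spec i (length L1)).
  - rewrite nth_error_app1 by (rewrite length_map; lia). apply nth_error_map.
  - rewrite nth_error_app2 by (rewrite length_map; lia). rewrite length_map. apply nth_error_map.
Qed.

(* The edges of the second component come after those of the first in [edges]. *)
Definition shift_lengths (T1 : sp) (l : nat -> R) : nat -> R :=
  fun i => l (length (edges T1) + i)%nat.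

Lemma realization_split (T1 T2 T : sp) (f : V T1 -> V T) (g : V T2 -> V T) l p :
  edges T = map (map_edge f) (edges T1) ++ map (map_edge g) (edges T2) ->
  realization T l p <->
  realization T1 l (fun v => p (f v)) /\ realization T2 (shift_lengths T1 l) (fun v => p (g v)).
Proof.
  intros HE. unfold realization, shift_lengths. rewrite HE. split.
  - intros Hp; split; intros i u v Hi.
    + assert (Hlt : (i < length (edges T1))%nat) by (apply nth_error_Some; congruence).
      apply (Hp i (f u) (f v)). rewrite nth_error_app_map_edge.
      destruct (Nat.ltb_spec i (length (edges T1))); [|lia]. rewrite Hi. reflexivity.
    + apply (Hp (length (edges T1) + i)%nat (g u) (g v)). rewrite nth_error_app_map_edge.
      destruct (Nat.ltb_spec (length (edges T1) + i) (length (edges T1))); [lia|].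
      replace (length (edges T1) + i - length (edges T1))%nat with i by lia.
      rewrite Hi. reflexivity.
  - intros [H1 H2] i u v Hi. rewrite nth_error_app_map_edge in Hi.
    destruct (Nat.ltb_spec i (length (edges T1))).
    + destruct (nth_error (edges T1) i) as [[a b]|] eqn:E; inversion Hi; subst.
      exact (H1 _ _ _ E).
    + destruct (nth_error (edges T2) (i - length (edges T1))) as [[a b]|] eqn:E;
        inversion Hi; subst.
      apply H2 in E.
      replace (length (edges T1) + (i - length (edges T1)))%nat with i in E by lia. exact E.
Qed.

Lemma dist_set_edge l d : 0 <= l 0%nat -> dist_set SPEdge l d <-> d = l 0%nat.
Proof.
  intros Hl. split.
  - intros [p [Hp ->]]. exact (Hp 0%nat Src Snk eq_refl).
  - intros ->. exists (fun v => match v with Src => (0, 0) | _ => (l 0%nat, 0) end).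
    split.
    + intros [|[|i]] u v H; inversion H; subst.
      unfold dist2; cbn [fst snd]. apply sqrt_eq_pow2; [exact Hl | ring].
    + unfold dist2; cbn [fst snd]. symmetry. apply sqrt_eq_pow2; [exact Hl | ring].
Qed.

Definition glue_ser T1 T2 (X Y Z : R * R) (q1 : V T1 -> R * R) (q2 : V T2 -> R * R)
  (v : V (SPSer T1 T2)) : R * R :=
  match v with
  | Src => X
  | Snk => Z
  | Inn (inl (inl i)) => q1 (Inn i)
  | Inn (inl (inr j)) => q2 (Inn j)
  | Inn (inr _) => Y
  end.

Lemma dist_set_ser T1 T2 l d :
  dist_set (SPSer T1 T2) l d <->
  exists d1 d2, dist_set T1 l d1 /\ dist_set T2 (shift_lengths T1 l) d2 /\ triangle_ineq d1 d2 d.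
Proof.
  pose proof (realization_split T1 T2 (SPSer T1 T2) (ser_left T1 T2) (ser_right T1 T2) l)
    as Hsplit.
  split.
  - intros [p [Hp ->]]. apply (Hsplit p eq_refl) in Hp. destruct Hp as [H1 H2].
    exists (dist2 (p (Inn (inr tt))) (p Snk)), (dist2 (p Src) (p (Inn (inr tt)))).
    split; [eexists; split; [exact H1 | reflexivity]|].
    split; [eexists; split; [exact H2 | reflexivity]|].
    apply triangle_ineq_dist2.
  - intros (d1 & d2 & D1 & D2 & Htri).
    destruct (triangle_exists d1 d2 d) as (X & Y & Z & eXY & eYZ & eXZ);
      [exact (dist_set_ge0 _ _ _ D1) | exact (dist_set_ge0 _ _ _ D2) | exact Htri |].
    destruct (dist_set_relocate _ _ _ Y Z D1 eYZ) as (q1 & R1 & Y1 & Z1).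
    destruct (dist_set_relocate _ _ _ X Y D2 eXY) as (q2 & R2 & X2 & Y2).
    exists (glue_ser T1 T2 X Y Z q1 q2). split; [|exact (eq_sym eXZ)].
    apply (Hsplit _ eq_refl). split.
    + apply (realization_ext _ _ q1); [intros [| |i]; simpl; auto | exact R1].
    + apply (realization_ext _ _ q2); [intros [| |i]; simpl; auto | exact R2].
Qed.

Definition glue_par T1 T2 (q1 : V T1 -> R * R) (q2 : V T2 -> R * R)
  (v : V (SPPar T1 T2)) : R * R :=
  match v with
  | Src => q1 Src
  | Snk => q1 Snk
  | Inn (inl i) => q1 (Inn i)
  | Inn (inr j) => q2 (Inn j)
  end.

Lemma dist_set_par T1 T2 l d :
  dist_set (SPPar T1 T2) l d <-> dist_set T1 l d /\ dist_set T2 (shift_lengths T1 l) d.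
Proof.
  pose proof (realization_split T1 T2 (SPPar T1 T2) (par_left T1 T2) (par_right T1 T2) l)
    as Hsplit.
  split.
  - intros [p [Hp Hd]]. apply (Hsplit p eq_refl) in Hp. destruct Hp as [H1 H2].
    split; eexists; split; eassumption.
  - intros [[q1 [R1 Hd]] D2].
    destruct (dist_set_relocate _ _ _ (q1 Src) (q1 Snk) D2 (eq_sym Hd)) as (q2 & R2 & Src2 & Snk2).
    exists (glue_par T1 T2 q1 q2). split; [|exact Hd].
    apply (Hsplit _ eq_refl). split.
    + apply (realization_ext _ _ q1); [intros [| |i]; simpl; auto | exact R1].
    + apply (realization_ext _ _ q2); [intros [| |i]; simpl; auto | exact R2].
Qed.

Definition nonneg_interval_or_empty (D : R -> Prop) :=
  (forall d, ~ D d) \/ exists a b, 0 <= a <= b /\ forall d, D d <-> a <= d <= b.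

Lemma nonneg_interval_or_empty_inter (D D1 D2 : R -> Prop) :
  nonneg_interval_or_empty D1 -> nonneg_interval_or_empty D2 ->
  (forall d, D d <-> D1 d /\ D2 d) -> nonneg_interval_or_empty D.
Proof.
  intros [E1 | (a1 & b1 & h1 & H1)] [E2 | (a2 & b2 & h2 & H2)] HD;
    try (left; intros d Hd; apply HD in Hd; destruct Hd as [Hd1 Hd2];
         solve [eapply E1; eauto | eapply E2; eauto]).
  set (a := Rmax a1 a2). set (b := Rmin b1 b2).
  assert (Ha : a1 <= a /\ a2 <= a /\ (a = a1 \/ a = a2))
    by (unfold a, Rmax; destruct (Rle_dec a1 a2); lra).
  assert (Hb : b <= b1 /\ b <= b2 /\ (b = b1 \/ b = b2))
    by (unfold b, Rmin; destruct (Rle_dec b1 b2); lra).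
  destruct (Rle_dec a b).
  - right. exists a, b. split; [lra|]. intros d. rewrite HD, H1, H2. lra.
  - left. intros d Hd. apply HD in Hd. rewrite H1, H2 in Hd. lra.
Qed.

(* Given [a1 <= d1 <= b1] and [a2 <= d2 <= b2], the attainable third sides form
   [[max(0, a1 - b2, a2 - b1), b1 + b2]]. *)
Lemma nonneg_interval_or_empty_triangle (D D1 D2 : R -> Prop) :
  nonneg_interval_or_empty D1 -> nonneg_interval_or_empty D2 ->
  (forall d, D d <-> exists d1 d2, D1 d1 /\ D2 d2 /\ triangle_ineq d1 d2 d) ->
  nonneg_interval_or_empty D.
Proof.
  unfold triangle_ineq.
  intros [E1 | (a1 & b1 & h1 & H1)] [E2 | (a2 & b2 & h2 & H2)] HD;
    try (left; intros d Hd; apply HD in Hd; destruct Hd as (d1 & d2 & Hd1 & Hd2 & _);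
         solve [eapply E1; eauto | eapply E2; eauto]).
  set (m := Rmax (Rmax 0 (a1 - b2)) (a2 - b1)).
  assert (Hm : 0 <= m /\ a1 - b2 <= m /\ a2 - b1 <= m
               /\ (m = 0 \/ m = a1 - b2 \/ m = a2 - b1)).
  { unfold m, Rmax. destruct (Rle_dec 0 (a1 - b2)), (Rle_dec _ (a2 - b1)); lra. }
  right. exists m, (b1 + b2). split; [lra|].
  intros d. rewrite HD. split.
  - intros (d1 & d2 & F1 & F2 & e). apply H1 in F1. apply H2 in F2. lra.
  - intros Hd.
    destruct (Rle_dec (a1 + a2) d);
      [destruct (Rle_dec b1 (d - a2)) | destruct (Rle_dec a1 a2)].
    + exists b1, (d - b1). rewrite H1, H2. lra.
    + exists (d - a2), a2. rewrite H1, H2. lra.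
    + destruct (Rle_dec a1 (a2 - d)).
      * exists (a2 - d), a2. rewrite H1, H2. lra.
      * exists a1, a2. rewrite H1, H2. lra.
    + destruct (Rle_dec a2 (a1 - d)).
      * exists a1, (a1 - d). rewrite H1, H2. lra.
      * exists a1, a2. rewrite H1, H2. lra.
Qed.

Lemma dist_set_nonneg_interval_or_empty T : forall l,
  (forall i, (i < length (edges T))%nat -> 0 <= l i) ->
  nonneg_interval_or_empty (dist_set T l).
Proof.
  induction T as [|T1 IH1 T2 IH2|T1 IH1 T2 IH2]; intros l hl.
  - assert (h0 : 0 <= l 0%nat) by (apply hl; simpl; lia).
    right. exists (l 0%nat), (l 0%nat). split; [lra|].
    intros d. rewrite dist_set_edge by exact h0. lra.
  - assert (Hlen : length (edges (SPSer T1 T2)) = (length (edges T1) + length (edges T2))%nat)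
      by (simpl; rewrite length_app, !length_map; reflexivity).
    apply (nonneg_interval_or_empty_triangle _ (dist_set T1 l) (dist_set T2 (shift_lengths T1 l))).
    + apply IH1. intros i hi. apply hl. lia.
    + apply IH2. intros i hi. apply hl. lia.
    + intros d. apply dist_set_ser.
  - assert (Hlen : length (edges (SPPar T1 T2)) = (length (edges T1) + length (edges T2))%nat)
      by (simpl; rewrite length_app, !length_map; reflexivity).
    apply (nonneg_interval_or_empty_inter _ (dist_set T1 l) (dist_set T2 (shift_lengths T1 l))).
    + apply IH1. intros i hi. apply hl. lia.
    + apply IH2. intros i hi. apply hl. lia.
    + intros d. apply dist_set_par.
Qed.

Theorem mainTheorem4 (T : sp) (l : nat -> R)
  (hl : forall i, (i < length (edges T))%nat -> 0 <= l i) :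
  (forall d, ~ dist_set T l d) \/
  (exists a b, a <= b /\ forall d, dist_set T l d <-> a <= d <= b).
Proof.
  destruct (dist_set_nonneg_interval_or_empty T l hl) as [Hempty | (a & b & [_ Hab] & Hab_iff)].
  - left. exact Hempty.
  - right. exists a, b. split; [exact Hab | exact Hab_iff].
Qed.
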